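(* Let $R$ be a commutative ring and $\mathfrak a$ an ideal of $R$ such that $R$ is complete with respect to some $\mathfrak a$-filtration of $R$. Let $\mathfrak A=\mathfrak aR[[X]]+XR[[X]]$, let $n\ge0$ and $N\ge1$ be integers, and let $f,g\in R[[X]]$ be $\mathfrak a$-distinguished of order $n$ with $f\equiv g\pmod{\mathfrak A^{(n+1)N}}$. Then $P_f\equiv P_g\pmod{\mathfrak A^{N+1}}$ and $U_f\equiv U_g\pmod{\mathfrak A^N}$. Moreover, for each $i\le(n+1)N$ let $\Pi_i\subseteq R$ be a system of representatives for $R/\mathfrak a^i$, and assume $g=f\bmod\mathfrak A^{(n+1)N}$. Let $t=\tau_n(g)^{-1}\bmod\mathfrak A^{(n+1)N-n}$, set $S_0=1$, and for positive integers $i\le N-1$ define recursively $S_i=\tau_n(t\,\alpha_n(g)\,S_{i-1})\bmod\mathfrak A^{(n+1)N-n(i+1)}$. Then $$U_f^{-1}\equiv t\sum_{i=0}^{N-1}(-1)^iS_i\pmod{\mathfrak A^N}\quad\text{and}\quad P_f\equiv g\,t\sum_{i=0}^{N-1}(-1)^iS_i\pmod{\mathfrak A^N}.$$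
   Context: An $\mathfrak a$-filtration is a descending sequence of ideals each containing a power of $\mathfrak a$; $R$ is complete with respect to it if $R\to\varprojlim R/\mathfrak f_i$ is an isomorphism. $f\in R[[X]]$ is $\mathfrak a$-distinguished of order $n$ if $f_i\in\mathfrak a$ for $i<n$ and $f_n$ is a unit modulo $\mathfrak a$ ($f_i$ the coefficient of $X^i$). For such $f$ there are a unique monic polynomial $P_f\in R[X]$ of degree $n$ with non-leading coefficients in $\mathfrak a$ and a unique unit $U_f\in R[[X]]$ with $f=U_fP_f$. Operators: $\tau_n(f)=\sum_{i\ge0}f_{n+i}X^i$ and $\alpha_n(f)=\sum_{i=0}^{n-1}f_iX^i$. For $r\in R$ and $i\le(n+1)N$, $r\bmod\mathfrak a^i$ is the unique element of $\Pi_i$ congruent to $r$ modulo $\mathfrak a^i$; for $h\in R[[X]]$ and $k\le (n+1)N$, $h\bmod\mathfrak A^k=\sum_{i=0}^{k-1}(h_i\bmod\mathfrak a^{k-i})X^i\in R[X]$, a polynomial congruent to $h$ modulo $\mathfrak A^k$. *)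

From HB Require Import structures.
From mathcomp Require Import all_boot all_order all_algebra.
From Stdlib Require Import ClassicalEpsilon.
Set Implicit Arguments. Unset Strict Implicit. Unset Printing Implicit Defensive.
Import Order.TTheory GRing.Theory Num.Theory.
Local Open Scope ring_scope.

Section Defs.
Variable R : comPzRingType.

Definition is_ideal (a : R -> Prop) : Prop :=
  [/\ a 0, (forall x y, a x -> a y -> a (x + y)) & (forall r x, a x -> a (r * x))].

(** Power of an ideal in a ring given by its operations:
    I^0 = whole ring, I^(k+1) = I * I^k (finite sums of products). *)
Inductive ipow (T : Type) (zero : T) (add mul : T -> T -> T) (I : T -> Prop)
  : nat -> T -> Prop :=
| ipow_0 x : ipow zero add mul I 0 x
| ipow_zero k : ipow zero add mul I k.+1 zero
| ipow_mul k x y : I x -> ipow zero add mul I k y -> ipow zero add mul I k.+1 (mul x y)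
| ipow_add k u v : ipow zero add mul I k.+1 u -> ipow zero add mul I k.+1 v ->
                   ipow zero add mul I k.+1 (add u v).

Definition rpow (a : R -> Prop) (k : nat) : R -> Prop :=
  ipow 0 +%R *%R a k.

Definition is_filtration (a : R -> Prop) (F : nat -> R -> Prop) : Prop :=
  [/\ forall i, is_ideal (F i),
      forall i x, F i.+1 x -> F i x &
      forall i, exists k, forall x, rpow a k x -> F i x].

(** R -> lim R/F_i is bijective: injective, and every compatible family of
    residue classes (given by representatives x_i with x_j = x_i mod F_i
    for i <= j) comes from an element of R. *)
Definition complete_wrt (F : nat -> R -> Prop) : Prop :=
  (forall r, (forall i, F i r) -> r = 0) /\
  (forall x : nat -> R, (forall i j, (i <= j)%N -> F i (x j - x i)) ->
     exists r, forall i, F i (r - x i)).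

Definition pser := nat -> R.
Definition pzero : pser := fun _ => 0.
Definition pone : pser := fun k => if k == 0%N then 1 else 0.
Definition padd (f g : pser) : pser := fun k => f k + g k.
Definition popp (f : pser) : pser := fun k => - f k.
Definition psub (f g : pser) : pser := padd f (popp g).
Definition pmul (f g : pser) : pser :=
  fun k => \sum_(i < k.+1) f i * g (k - i)%N.

Definition punit (f : pser) : Prop := exists v, pmul f v = pone.
(** the inverse of a unit of R[[X]] (unique since R[[X]] is commutative) *)
Definition pinv (f : pser) : pser := epsilon (inhabits pzero) (fun v => pmul f v = pone).

(** the ideal  aR[[X]] + XR[[X]]  and its powers *)
Definition bigA (a : R -> Prop) : pser -> Prop := fun h => a (h 0%N).
Definition Apow (a : R -> Prop) (k : nat) : pser -> Prop :=
  ipow pzero padd pmul (bigA a) k.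
Definition pcong (a : R -> Prop) (k : nat) (f g : pser) : Prop :=
  Apow a k (psub f g).

Definition distinguished (a : R -> Prop) (n : nat) (f : pser) : Prop :=
  (forall i, (i < n)%N -> a (f i)) /\ exists u, a (f n * u - 1).

Definition weierstrass (a : R -> Prop) (n : nat) (f P U : pser) : Prop :=
  [/\ P n = 1, (forall i, (n < i)%N -> P i = 0), (forall i, (i < n)%N -> a (P i)),
      punit U & f = pmul U P].

Definition tau (n : nat) (f : pser) : pser := fun i => f (n + i)%N.
Definition alpha (n : nat) (f : pser) : pser := fun i => if (i < n)%N then f i else 0.

Definition rep_system (a : R -> Prop) (Pi : R -> Prop) (i : nat) : Prop :=
  forall r, exists p, [/\ Pi p, rpow a i (r - p) &
                        forall q, Pi q -> rpow a i (r - q) -> q = p].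

Definition rmod (a : R -> Prop) (Pi : nat -> R -> Prop) (i : nat) (r : R) : R :=
  epsilon (inhabits 0) (fun p => Pi i p /\ rpow a i (r - p)).

Definition pmodA (a : R -> Prop) (Pi : nat -> R -> Prop) (k : nat) (h : pser) : pser :=
  fun i => if (i < k)%N then rmod a Pi (k - i) (h i) else 0.

Fixpoint Sseq (a : R -> Prop) (Pi : nat -> R -> Prop) (n N : nat) (g t : pser)
  (i : nat) : pser :=
  match i with
  | 0 => pone
  | i'.+1 => pmodA a Pi ((n.+1 * N) - n * i'.+2)
               (tau n (pmul (pmul t (alpha n g)) (Sseq a Pi n N g t i')))
  end.

Definition altsum (N : nat) (S : nat -> pser) : pser :=
  fun k => \sum_(i < N) (-1) ^+ i * S i k.

End Defs.

(* Let M = (n+1)N and L_w h = tau_n (w h).  For P monic of degree n one has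
   tau_n (h P) = tau_n (h alpha_n(P)) + h.  Applied to P_f and P_g this shows that
   Z = U_g^-1 U_f - 1 satisfies Z = tau_n (U_g^-1 (f - g)) - L_{alpha_n(P_f)} Z, and
   that W = U_g^-1 tau_n(g) satisfies W = 1 - L_w W with w = tau_n(g)^-1 alpha_n(g).
   Since w has coefficients in a, L_w^i lands in a^i R[[X]] while each application
   of L_w costs at most n in the A-adic order, so the Neumann expansions of both
   fixpoint equations, truncated after N terms, give Z = 0 mod A^N and
   W = sum_i (-1)^i L_w^i(1) mod A^N; the S_i agree with L_w^i(1) modulo
   A^(M - n(i+1)).  Completeness of R is used only to invert tau_n(g), whose
   constant term g_n is a unit modulo a. *)

From HB Require Import structures.
From mathcomp Require Import all_boot all_order all_algebra.
From mathcomp Require Import boolp zify ring.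
From Stdlib Require Import ClassicalEpsilon.
Set Implicit Arguments. Unset Strict Implicit. Unset Printing Implicit Defensive.
Import GRing.Theory.
Local Open Scope ring_scope.

Section PowerSeriesRing.
Variable R : comPzRingType.

Definition ps : Type := pser R.
HB.instance Definition _ := gen_eqMixin ps.
HB.instance Definition _ := gen_choiceMixin ps.

Lemma ps_ext (f g : pser R) : (forall k, f k = g k) -> f = g.
Proof. by move=> h; apply: functional_extensionality_dep. Qed.

Fact paddA : associative (@padd R).
Proof. by move=> f g h; apply: ps_ext => k; rewrite /padd addrA. Qed.
Fact paddC : commutative (@padd R).
Proof. by move=> f g; apply: ps_ext => k; rewrite /padd addrC. Qed.
Fact padd0 : left_id (@pzero R) (@padd R).
Proof. by move=> f; apply: ps_ext => k; rewrite /padd /pzero add0r. Qed.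
Fact paddN : left_inverse (@pzero R) (@popp R) (@padd R).
Proof. by move=> f; apply: ps_ext => k; rewrite /padd /popp /pzero addNr. Qed.

HB.instance Definition _ := GRing.isZmodule.Build ps paddA paddC padd0 paddN.

Fact pmul_rev (p q : pser R) i : pmul p q i = \sum_(j < i.+1) p (i - j)%N * q j.
Proof.
rewrite /pmul (reindex_inj rev_ord_inj) /=.
by apply: eq_bigr => j _; rewrite (sub_ordK j).
Qed.

Fact pmulA : associative (@pmul R).
Proof.
move=> p q r; apply: ps_ext => i; rewrite {1}/pmul pmul_rev.
pose coef3 j k := p j * (q (i - j - k)%N * r k).
transitivity (\sum_(j < i.+1) \sum_(k < i.+1 | (k <= i - j)%N) coef3 j k).
  apply: eq_bigr => /= j _; rewrite pmul_rev big_distrr /=.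
  by rewrite (big_ord_narrow_leq (leq_subr _ _)).
rewrite (exchange_big_dep predT) //=; apply: eq_bigr => k _.
transitivity (\sum_(j < i.+1 | (j <= i - k)%N) coef3 j k).
  apply: eq_bigl => j; rewrite -ltnS -(ltnS j) -!subSn ?leq_ord //.
  by rewrite -subn_gt0 -(subn_gt0 j) -!subnDA addnC.
rewrite (big_ord_narrow_leq (leq_subr _ _)) /pmul big_distrl /=.
by apply: eq_bigr => j _; rewrite /coef3 -!subnDA addnC mulrA.
Qed.

Fact pmulC : commutative (@pmul R).
Proof.
move=> p q; apply: ps_ext => i; rewrite pmul_rev /pmul.
by apply: eq_bigr => j _; rewrite mulrC.
Qed.

Fact pmul1 : left_id (@pone R) (@pmul R).
Proof.
move=> p; apply: ps_ext => i; rewrite /pmul big_ord_recl subn0 /pone /=.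
by rewrite big1 => [|j _]; rewrite ?mul1r ?addr0 // mul0r.
Qed.

Fact pmulDl : left_distributive (@pmul R) (@padd R).
Proof.
move=> p q r; apply: ps_ext => i; rewrite /pmul /padd -big_split /=.
by apply: eq_bigr => j _; rewrite mulrDl.
Qed.

HB.instance Definition _ :=
  GRing.Zmodule_isComPzRing.Build ps pmulA pmulC pmul1 pmulDl.

Lemma ps_mulE (f g : ps) k : (f * g) k = \sum_(i < k.+1) f i * g (k - i)%N.
Proof. by []. Qed.
Lemma ps_addE (f g : ps) k : (f + g) k = f k + g k.
Proof. by []. Qed.
Lemma ps_subE (f g : ps) k : (f - g) k = f k - g k.
Proof. by []. Qed.
Lemma ps_oneE k : (1 : ps) k = if k == 0%N then 1 else 0.
Proof. by []. Qed.

Lemma ps_sumE I (r : seq I) (P : pred I) (F : I -> ps) k :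
  (\sum_(i <- r | P i) F i) k = \sum_(i <- r | P i) F i k.
Proof. by elim/big_rec2: _ => // i y1 y2 _ <-. Qed.

Lemma ps_signE i (h : ps) k : (((-1) ^+ i : ps) * h) k = (-1) ^+ i * h k.
Proof.
elim: i h => [|i IH] h; first by rewrite !expr0 !mul1r.
rewrite !exprS -!mulrA [in LHS]mulN1r.
by transitivity (- ((((-1) ^+ i : ps) * h) k)); rewrite // IH mulN1r.
Qed.

Definition psC (c : R) : ps := fun k => if k == 0%N then c else 0.
Definition psX : ps := fun k => (k == 1%N)%:R.

Lemma psC_mul c d : psC (c * d) = psC c * psC d.
Proof.
apply: ps_ext => -[|i]; rewrite ps_mulE.
  by rewrite big_ord_recl big_ord0 addr0.
rewrite /psC /=; apply/esym/big1 => -[[|l] hl] _ /=; by rewrite ?mulr0 ?mul0r.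
Qed.

Lemma psC_add c d : psC (c + d) = psC c + psC d.
Proof. by apply: ps_ext => i; rewrite ps_addE /psC; case: ifP; rewrite ?addr0. Qed.

Lemma ps_shift (h : ps) : h = psC (h 0%N) + psX * (fun j => h j.+1).
Proof.
apply: ps_ext => -[|j]; rewrite ps_addE ps_mulE.
  by rewrite big_ord_recl big_ord0 /psX /= mul0r !addr0.
rewrite !big_ord_recl big1 => [|i _]; last by rewrite /psX /= mul0r.
by rewrite /psX /= mul0r mul1r !add0r addr0 /bump /= subSS subn0.
Qed.

Lemma altsumE N (S : nat -> pser R) : altsum N S = \sum_(i < N) (-1) ^+ i * (S i : ps).
Proof. by apply: ps_ext => k; rewrite ps_sumE; apply: eq_bigr => i _; rewrite ps_signE. Qed.

Lemma pinvP (f : ps) : punit f -> f * pinv f = 1.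
Proof. exact: epsilon_spec. Qed.

Lemma ps_expr_coef_lt (d : ps) : d 0%N = 0 -> forall i j, (j < i)%N -> (d ^+ i) j = 0.
Proof.
move=> d0; elim=> [|i IH] j //; rewrite exprS ps_mulE => hj.
apply: big1 => -[[|l] hl] _ /=; first by rewrite d0 mul0r.
by rewrite IH ?mulr0 //; lia.
Qed.

(* Inverse of [1 - d] with [d 0 = 0]: the k-th coefficient of the geometric
   series is already that of its k-th partial sum. *)
Lemma ps_unit_coef0 (p : ps) r : p 0%N * r = 1 -> punit p.
Proof.
move=> hp; pose d := 1 - psC r * p.
have d0 : d 0%N = 0.
  by rewrite /d ps_subE ps_mulE big_ord_recl big_ord0 addr0 /psC /= mulrC hp subrr.
pose q : ps := fun k => (\sum_(i < k.+1) d ^+ i) k.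
have qE K k : (k < K)%N -> (\sum_(i < K) d ^+ i) k = q k.
  elim: K => [|K IH] // hk; case: (ltngtP k K) => hkK; last by rewrite hkK.
    rewrite big_ord_recr; transitivity ((\sum_(i < K) d ^+ i) k + (d ^+ K) k) => //.
    by rewrite IH // ps_expr_coef_lt // addr0.
  by lia.
have hq : (1 - d) * q = 1.
  apply: ps_ext => k.
  transitivity (((1 - d) * \sum_(i < k.+1) d ^+ i) k).
    by rewrite !ps_mulE; apply: eq_bigr => i _; rewrite qE // ltnS leq_subr.
  by rewrite -opprB mulNr -subrX1 opprB ps_subE ps_expr_coef_lt ?subr0.
exists (psC r * q); change (p * (psC r * q) = 1).
by rewrite mulrA (mulrC p) -hq /d opprB addrC subrK.
Qed.

Lemma tauD n (x y : ps) : tau n (x + y) = (tau n x : ps) + (tau n y : ps).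
Proof. exact: ps_ext. Qed.
Lemma tauB n (x y : ps) : tau n (x - y) = (tau n x : ps) - (tau n y : ps).
Proof. exact: ps_ext. Qed.

Lemma tau_mul n (h p : ps) :
  tau n (h * p) = (tau n (h * (alpha n p : ps)) : ps) + h * (tau n p : ps).
Proof.
apply: ps_ext => j; rewrite ps_addE /tau !ps_mulE.
rewrite (big_ord_widen (n + j).+1 (fun i => h i * p (n + (j - i))%N)); last first.
  by rewrite ltnS leq_addl.
rewrite [X in _ + X]big_mkcond -big_split /=; apply: eq_bigr => i _.
have hi := ltn_ord i.
rewrite /alpha; case: ifP => h1; case: ifP => h2.
- by lia.
- by rewrite addr0.
- by rewrite mulr0 add0r addnBA //; lia.
- by lia.
Qed.

Lemma tau_monic n (P : ps) :
  P n = 1 -> (forall i, (n < i)%N -> P i = 0) -> (tau n P : ps) = 1.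
Proof.
move=> Pn1 P0 ; apply: ps_ext => -[|j]; rewrite /tau ps_oneE /= ?addn0 //.
by rewrite P0 //; lia.
Qed.

Lemma alpha_monicB n (P Q : ps) :
  P n = 1 -> (forall i, (n < i)%N -> P i = 0) ->
  Q n = 1 -> (forall i, (n < i)%N -> Q i = 0) -> alpha n (P - Q) = P - Q.
Proof.
move=> Pn P0 Qn Q0; apply: ps_ext => j; rewrite /alpha; case: ifP => // /negbT.
rewrite -leqNgt leq_eqVlt => /orP[/eqP <-|nj]; first by rewrite ps_subE Pn Qn subrr.
by rewrite ps_subE P0 ?Q0 ?subrr.
Qed.

Definition tau_mulr n (w h : ps) : ps := tau n (w * h).

Lemma tau_mulrB n w : {morph tau_mulr n w : x y / x - y}.
Proof. by move=> x y; rewrite /tau_mulr mulrBr tauB. Qed.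

Lemma iter_neumann (L : ps -> ps) : {morph L : x y / x - y} ->
  forall c Z, Z = c - L Z -> forall K,
  Z = \sum_(i < K) (-1) ^+ i * iter i L c + (-1) ^+ K * iter K L Z.
Proof.
move=> LB c Z hZ; elim=> [|K IH]; first by rewrite big_ord0 add0r mul1r.
rewrite big_ord_recr /= {1}IH -addrA; congr (_ + _).
have iterB k : {morph iter k L : x y / x - y} by elim: k => //= k IHk x y; rewrite -LB -IHk.
have e : iter K L Z = iter K L c - iter K.+1 L Z by rewrite {1}hZ iterB iterSr.
by rewrite [in LHS]e mulrBr exprS mulN1r mulNr.
Qed.

End PowerSeriesRing.

Section IdealPowers.
Variables (R : comPzRingType) (a : R -> Prop).
Hypothesis a_ideal : is_ideal a.

Lemma ideal0 : a 0. Proof. by case: a_ideal. Qed.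
Lemma idealMl r x : a x -> a (r * x). Proof. by case: a_ideal => _ _; apply. Qed.

Lemma rpow0 k : rpow a k 0.
Proof. by case: k => [|k]; [exact: ipow_0|exact: ipow_zero]. Qed.
Lemma rpowD k x y : rpow a k x -> rpow a k y -> rpow a k (x + y).
Proof. by case: k => [|k] hx hy; [exact: ipow_0|exact: ipow_add]. Qed.
Lemma rpowMl k r x : rpow a k x -> rpow a k (r * x).
Proof.
move=> h; elim: h r => {k x} [x|k|k x y ax hy _|k u v _ IHu _ IHv] r.
- exact: ipow_0.
- by rewrite mulr0; exact: ipow_zero.
- by rewrite mulrA; apply: ipow_mul => //; exact: idealMl.
- by rewrite mulrDr; apply: ipow_add; [exact: IHu|exact: IHv].
Qed.
Lemma rpowN k x : rpow a k x -> rpow a k (- x).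
Proof. by rewrite -mulN1r; apply: rpowMl. Qed.
Lemma rpowB k x y : rpow a k x -> rpow a k y -> rpow a k (x - y).
Proof. by move=> hx hy; apply/rpowD/rpowN. Qed.
Lemma rpow_sum k I (r : seq I) (P : pred I) (F : I -> R) :
  (forall i, P i -> rpow a k (F i)) -> rpow a k (\sum_(i <- r | P i) F i).
Proof. by move=> h; apply: big_ind => //; [exact: rpow0|exact: rpowD]. Qed.

Lemma rpow_pred k x : rpow a k x -> rpow a k.-1 x.
Proof.
elim=> {k x} [x|k|k x y ax hy _|k u v _ IHu _ IHv] /=.
- exact: ipow_0.
- exact: rpow0.
- exact: rpowMl.
- exact: rpowD.
Qed.
Lemma rpow_le k m x : (k <= m)%N -> rpow a m x -> rpow a k x.
Proof.
move=> /subnK <-; elim: (m - k)%N => [|d IH] h; first by rewrite add0n in h.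
by apply: IH; exact: (rpow_pred h).
Qed.

Lemma rpow_mul i j x y : rpow a i x -> rpow a j y -> rpow a (i + j) (x * y).
Proof.
move=> hx; elim: hx y => {i x} [x|k|k x z ax _ IH|k u v _ IHu _ IHv] y hy.
- by rewrite add0n; exact: rpowMl.
- by rewrite mul0r; exact: rpow0.
- by rewrite -mulrA addSn; apply: ipow_mul => //; exact: IH.
- by rewrite mulrDl; apply: rpowD; [exact: IHu|exact: IHv].
Qed.
Lemma rpow1 x : a x -> rpow a 1 x.
Proof. by move=> ax; rewrite -(mulr1 x); apply: ipow_mul => //; exact: ipow_0. Qed.
Lemma rpowX m x : a x -> rpow a m (x ^+ m).
Proof.
by move=> ax; elim: m => [|m IH]; [exact: ipow_0|rewrite exprS; apply: ipow_mul].
Qed.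

(* [Acoef k h] is [h \in A^k] read off coefficientwise (see [ApowP]), with
   truncated subtraction making the coefficients from [X^k] on unconstrained;
   [acoef i h] is [h \in a^i R[[X]]]. *)
Definition Acoef k (h : ps R) := forall j, rpow a (k - j) (h j).
Definition acoef i (h : ps R) := forall j, rpow a i (h j).

Lemma Acoef0 k : Acoef k 0. Proof. by move=> j; exact: rpow0. Qed.
Lemma AcoefD k x y : Acoef k x -> Acoef k y -> Acoef k (x + y).
Proof. by move=> hx hy j; apply: rpowD. Qed.
Lemma AcoefN k x : Acoef k x -> Acoef k (- x).
Proof. by move=> hx j; apply: rpowN. Qed.
Lemma AcoefB k x y : Acoef k x -> Acoef k y -> Acoef k (x - y).
Proof. by move=> hx hy j; apply: rpowB. Qed.
Lemma Acoef_sum k I (r : seq I) (P : pred I) (F : I -> ps R) :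
  (forall i, P i -> Acoef k (F i)) -> Acoef k (\sum_(i <- r | P i) F i).
Proof. by move=> h; apply: big_ind => //; [exact: Acoef0|exact: AcoefD]. Qed.
Lemma Acoef_le k m h : Acoef m h -> (k <= m)%N -> Acoef k h.
Proof. by move=> hh hkm j; apply: (rpow_le _ (hh j)); apply: leq_sub2r. Qed.
Lemma AcoefM i j x y : Acoef i x -> Acoef j y -> Acoef (i + j) (x * y).
Proof.
move=> hx hy l; rewrite ps_mulE; apply: rpow_sum => m _.
by apply: (rpow_le _ (rpow_mul (hx m) (hy _))); have := ltn_ord m; lia.
Qed.
Lemma AcoefMl k u h : Acoef k h -> Acoef k (u * h).
Proof.
move=> hh l; rewrite ps_mulE; apply: rpow_sum => m _; apply: rpowMl.
by apply: (rpow_le _ (hh _)); rewrite leq_sub2l // leq_subr.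
Qed.
Lemma AcoefMr k u h : Acoef k h -> Acoef k (h * u).
Proof. by rewrite mulrC; apply: AcoefMl. Qed.
Lemma Acoef_tau n k h : Acoef k h -> Acoef (k - n) (tau n h).
Proof. by move=> hh j; rewrite /tau -subnDA; apply: hh. Qed.
Lemma Acoef_alpha n k h : Acoef k h -> Acoef k (alpha n h).
Proof. by move=> hh j; rewrite /alpha; case: ifP => _; [apply: hh|apply: rpow0]. Qed.

Lemma acoef_Acoef k h : acoef k h -> Acoef k h.
Proof. by move=> hh j; apply: (rpow_le _ (hh j)); apply: leq_subr. Qed.
Lemma acoefM i j x y : acoef i x -> acoef j y -> acoef (i + j) (x * y).
Proof. by move=> hx hy l; rewrite ps_mulE; apply: rpow_sum => m _; apply: rpow_mul. Qed.
Lemma acoefMl i u h : acoef i h -> acoef i (u * h).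
Proof. by move=> hh l; rewrite ps_mulE; apply: rpow_sum => m _; apply: rpowMl. Qed.
Lemma acoef_alpha n (P : ps R) : (forall i, (i < n)%N -> a (P i)) -> acoef 1 (alpha n P).
Proof. by move=> h j; rewrite /alpha; case: ifP => hj; [exact: rpow1 (h _ hj)|exact: rpow0]. Qed.

Lemma acoef_iter_tau_mulr n w h i : acoef 1 w -> acoef i (iter i (tau_mulr n w) h).
Proof.
move=> hw; elim: i => [|i IH] j /=; first exact: ipow_0.
by rewrite /tau_mulr -add1n; apply: (acoefM hw IH).
Qed.
Lemma Acoef_tau_mulr n k w h : Acoef k h -> Acoef (k - n) (tau_mulr n w h).
Proof. by move=> hh; apply/Acoef_tau/AcoefMl. Qed.

Lemma rpow_psC m c : rpow a m c -> Apow a m (psC c).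
Proof.
elim=> {m c} [x|k|k x y ax _ IH|k u v _ IHu _ IHv].
- exact: ipow_0.
- have -> : psC 0 = pzero R by apply: ps_ext => i; rewrite /psC /pzero; case: ifP.
  exact: ipow_zero.
- by rewrite psC_mul; exact: ipow_mul.
- by rewrite psC_add; exact: ipow_add.
Qed.

Lemma ApowP k (h : ps R) : Apow a k h <-> Acoef k h.
Proof.
split.
  elim=> {k h} [x|k|k x y ax _ IH|k u v _ IHu _ IHv] j.
  - exact: ipow_0.
  - exact: rpow0.
  - change (rpow a (k.+1 - j) (((x : ps R) * (y : ps R)) j)).
    rewrite ps_mulE big_ord_recl; apply: rpowD.
      by rewrite subn0; apply: (rpow_le _ (rpow_mul (rpow1 ax) (IH j))); lia.
    apply: rpow_sum => -[i hi] _; apply: rpowMl; apply: (rpow_le _ (IH _)).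
    by rewrite lift0 /=; lia.
  - exact: rpowD.
elim: k h => [|k IH] h hh; first exact: ipow_0.
rewrite (ps_shift h); apply: ipow_add.
  by apply: rpow_psC; have := hh 0%N; rewrite subn0.
apply: ipow_mul; first exact: ideal0.
by apply: IH => j; have := hh j.+1; rewrite subSS.
Qed.

Lemma rmodP Pi i r : rep_system a (Pi i) i -> rpow a i (r - rmod a Pi i r).
Proof.
move=> hr; have [p [Pp hp _]] := hr r.
pose P q := Pi i q /\ rpow a i (r - q).
by case: (epsilon_spec (inhabits 0) P (ex_intro _ p (conj Pp hp))).
Qed.

Lemma Acoef_pmodA Pi k (h : ps R) :
  (forall i, (i <= k)%N -> rep_system a (Pi i) i) -> Acoef k (h - (pmodA a Pi k h : ps R)).
Proof.
move=> hr j; rewrite ps_subE /pmodA; case: ifP => hj.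
  by apply: rmodP; apply: hr; apply: leq_subr.
by rewrite (_ : k - j = 0)%N; [exact: ipow_0|lia].
Qed.

Lemma filtration_rpow_mono F : is_filtration a F ->
  exists ka : nat -> nat,
    {homo ka : i j / (i <= j)%N} /\ forall i y, rpow a (ka i) y -> F i y.
Proof.
case=> _ _ /choice[kk kkP].
exists (fun i => \sum_(0 <= l < i.+1) kk l)%N; split=> [i j ij|i y hy].
  by rewrite (@big_cat_nat _ _ _ i.+1 0 j.+1) //= leq_addr.
by apply/kkP/(rpow_le _ hy); rewrite big_nat_recr //= leq_addl.
Qed.

Lemma complete_unit F : is_filtration a F -> complete_wrt F ->
  forall c u, a (c * u - 1) -> exists r, c * r = 1.
Proof.
move=> hF [Cinj Csurj] c u; set x := (_ - 1) => ax.
have [ka [ka_mono kaF]] := filtration_rpow_mono hF; case: hF => Fid _ _.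
have F0 i : F i 0 by case: (Fid i).
have FD i v w : F i v -> F i w -> F i (v + w) by case: (Fid i) => _ + _; apply.
have FM i r v : F i v -> F i (r * v) by case: (Fid i) => _ _; apply.
have Fx i m : (ka i <= m)%N -> F i ((- x) ^+ m).
  move=> hm; apply/kaF/(rpow_le hm)/rpowX.
  by rewrite -mulN1r; apply: idealMl.
(* partial sums of [(c u)^-1 = (1 + x)^-1 = \sum_m (- x)^m] *)
pose y i := \sum_(0 <= m < ka i) (- x) ^+ m.
have hy i j : (i <= j)%N -> F i (y j - y i).
  move=> hij; rewrite /y [X in X - _](@big_cat_nat _ _ _ (ka i)) //= ?ka_mono //.
  rewrite addrAC subrr add0r big_nat_cond.
  apply: big_ind => [|v w|m /andP[/andP[hm _] _]]; [exact: F0|exact: FD|exact: Fx].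
have [r0 hr0] := Csurj y hy.
exists (u * r0); apply/eqP; rewrite -subr_eq0 mulrA; apply/eqP; apply: Cinj => i.
have cuE : c * u = 1 - - x by rewrite opprK addrC subrK.
have e1 : c * u * y i = 1 - (- x) ^+ ka i.
  by rewrite cuE /y big_mkord -[1 - _]opprB mulNr -subrX1 opprB.
have -> : c * u * r0 - 1 = c * u * (r0 - y i) + - (- x) ^+ ka i.
  by rewrite mulrBr e1; ring.
by apply: FD; [exact: FM|rewrite -mulN1r; apply/FM/Fx].
Qed.

Lemma Acoef_fixpoint n (w c Z : ps R) K :
  acoef 1 w -> Acoef (K + n * K.-1) c -> Z = c - tau_mulr n w Z -> Acoef K Z.
Proof.
move=> hw hc hZ; rewrite (iter_neumann (@tau_mulrB _ n w) hZ K).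
apply: AcoefD; last by apply/AcoefMl/acoef_Acoef/acoef_iter_tau_mulr.
apply: Acoef_sum => i _; apply: AcoefMl.
have Li m : Acoef (K + n * K.-1 - n * m) (iter m (tau_mulr n w) c).
  elim: m => [|m IH] /=; first by rewrite muln0 subn0.
  by apply: (Acoef_le (Acoef_tau_mulr n w IH)); rewrite mulnS; lia.
apply: (Acoef_le (Li i)); rewrite -addnBA ?leq_addr //.
by rewrite leq_mul2l -ltnS (ltn_predK (ltn_ord i)) ltn_ord orbT.
Qed.

Lemma distinguished_tau_unit F n (g : ps R) :
  is_filtration a F -> complete_wrt F -> distinguished a n g -> punit (tau n g).
Proof.
move=> hF hC [_ [u hu]]; have [r hr] := complete_unit hF hC hu.
by apply: (ps_unit_coef0 (r := r)); rewrite /tau addn0.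
Qed.

Section WeierstrassCongruence.
Variables (n N : nat) (f g Pf Uf Pg Ug : ps R).
Hypothesis N_gt0 : (0 < N)%N.
Hypotheses (wf : weierstrass a n f Pf Uf) (wg : weierstrass a n g Pg Ug).
Hypothesis fg : Acoef (n.+1 * N) (f - g).

Let vf : ps R := pinv Uf.
Let vg : ps R := pinv Ug.

Lemma weierstrass_invU_mul : vg * g = Pg.
Proof. by case: wg => _ _ _ Ugu eg; rewrite (eg : g = Ug * Pg) mulrA (mulrC vg) pinvP // mul1r. Qed.

Lemma unit_ratio_mul : (vg * Uf - 1) * Pf = vg * (f - g) + Pg - Pf.
Proof.
case: wf => _ _ _ _ ef; rewrite -weierstrass_invU_mul (ef : f = Uf * Pf); ring.
Qed.

Lemma unit_ratio_fixpoint :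
  let Z := vg * Uf - 1 in Z = (tau n (vg * (f - g)) : ps R) - tau_mulr n (alpha n Pf) Z.
Proof.
case: wf wg => Pfn Pfz _ _ _ [Pgn Pgz _ _ _] Z.
have tPf : (tau n Pf : ps R) = 1 by apply: tau_monic.
have tPg : (tau n Pg : ps R) = 1 by apply: tau_monic.
have := tau_mul n Z Pf; rewrite unit_ratio_mul tauB tauD tPf tPg mulr1 addrK.
by move=> ->; rewrite /tau_mulr mulrC addrAC subrr add0r.
Qed.

Lemma weierstrass_cong : Acoef N.+1 (Pf - Pg) /\ Acoef N (Uf - Ug).
Proof.
have [Pfn Pfz Pfa _ _] := wf; have [Pgn Pgz _ Ugu _] := wg.
set Z := vg * Uf - 1.
have hZ : Acoef N Z.
  apply: (Acoef_fixpoint (acoef_alpha Pfa) _ unit_ratio_fixpoint).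
  by apply: (Acoef_le (Acoef_tau n (AcoefMl vg fg))); nia.
split; last first.
  have -> : Uf - Ug = Ug * Z by rewrite /Z mulrBr mulr1 mulrA pinvP // mul1r.
  exact: AcoefMl.
have -> : Pf - Pg = alpha n (vg * (f - g) - Z * Pf).
  rewrite unit_ratio_mul (_ : vg * (f - g) - _ = Pf - Pg); last by ring.
  by rewrite alpha_monicB.
case: (posnP n) => [-> j|n_gt0]; first exact: rpow0.
apply/Acoef_alpha/AcoefB; first by apply: (Acoef_le (AcoefMl vg fg)); nia.
rewrite -addn1; apply: (AcoefM hZ) => -[|j]; first exact/rpow1/Pfa.
by rewrite subSS sub0n; exact: ipow_0.
Qed.

Section Approximation.
Variables (F : nat -> R -> Prop) (Pi : nat -> R -> Prop).
Hypotheses (hF : is_filtration a F) (hC : complete_wrt F) (dg : distinguished a n g).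
Hypothesis Pi_rep : forall i, (i <= n.+1 * N)%N -> rep_system a (Pi i) i.

Let u : ps R := pinv (tau n g).
Let ag : ps R := alpha n g.
Let L := tau_mulr n (u * ag).
Let W : ps R := vg * tau n g.
Let t : ps R := pmodA a Pi (n.+1 * N - n) u.
Let s : ps R := altsum N (Sseq a Pi n N g t).

Lemma invU_tauE : vg = W * u.
Proof. by rewrite /W /u -mulrA pinvP ?mulr1 //; apply: distinguished_tau_unit hF hC dg. Qed.

Lemma invU_tau_fixpoint : W = 1 - L W.
Proof.
case: wg => Pgn Pgz _ _ _.
have -> : L W = tau n (vg * ag).
  by rewrite /L /tau_mulr [in RHS]invU_tauE mulrC mulrA.
have := tau_mul n vg g; rewrite weierstrass_invU_mul tau_monic // => ->.
by rewrite -/W addrAC subrr add0r.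
Qed.

Lemma inv_tau_approx : Acoef (n.+1 * N - n) (u - t).
Proof. by apply: Acoef_pmodA => i hi; apply: Pi_rep; apply: leq_trans hi (leq_subr _ _). Qed.

Lemma Sseq_approx i :
  Acoef (n.+1 * N - n * i.+1) ((Sseq a Pi n N g t i : ps R) - iter i L 1).
Proof.
elim: i => [|i IH]; first by rewrite /= subrr; apply: Acoef0.
set Si : ps R := Sseq a Pi n N g t i.
pose B : ps R := tau n (t * ag * Si).
have SB : Acoef (n.+1 * N - n * i.+2) ((Sseq a Pi n N g t i.+1 : ps R) - B).
  rewrite -opprB; apply/AcoefN/Acoef_pmodA => j hj.
  by apply: Pi_rep; apply: leq_trans hj (leq_subr _ _).
have BL : Acoef (n.+1 * N - n * i.+2) (B - L Si).
  have -> : B - L Si = tau n (ag * Si * - (u - t)).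
    have E : t * ag * Si - u * ag * Si = ag * Si * - (u - t) :> ps R.
      by ring.
    by rewrite /B /L /tau_mulr -tauB -E.
  apply: (Acoef_le (Acoef_tau n (AcoefMl _ (AcoefN inv_tau_approx)))).
  by rewrite !mulnS; lia.
have LL : Acoef (n.+1 * N - n * i.+2) (L Si - L (iter i L 1)).
  rewrite -tau_mulrB; apply: (Acoef_le (Acoef_tau_mulr _ _ IH)).
  by rewrite (mulnS n i.+1); lia.
have -> : (Sseq a Pi n N g t i.+1 : ps R) - iter i.+1 L 1
    = ((Sseq a Pi n N g t i.+1 : ps R) - B) + (B - L Si) + (L Si - L (iter i L 1)).
  by rewrite /=; ring.
by apply: AcoefD; [apply: AcoefD|].
Qed.

Lemma altsum_approx : Acoef N (W - s).
Proof.
have hw : acoef 1 (u * ag) by apply/acoefMl/acoef_alpha; case: dg.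
have -> : W - s = \sum_(i < N) (-1) ^+ i * (iter i L 1 - (Sseq a Pi n N g t i : ps R))
                  + (-1) ^+ N * iter N L W.
  rewrite /s altsumE {1}(iter_neumann (@tau_mulrB _ n _) invU_tau_fixpoint N).
  by rewrite addrAC -sumrB; congr (_ + _); apply: eq_bigr => i _; rewrite mulrBr.
apply: AcoefD; last by apply/AcoefMl/acoef_Acoef/acoef_iter_tau_mulr.
apply: Acoef_sum => i _; apply/AcoefMl; rewrite -opprB; apply/AcoefN.
apply: (Acoef_le (Sseq_approx i)).
have : (n * i.+1 <= n * N)%N by rewrite leq_mul2l ltn_ord orbT.
by rewrite mulSn; lia.
Qed.

Lemma weierstrass_invU_approx : Acoef N (vf - t * s).
Proof.
have [_ _ _ Ufu _] := wf; have [_ _ _ Ugu _] := wg.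
have -> : vf - t * s = vf * vg * - (Uf - Ug) + (u * (W - s) + (u - t) * s).
  have -> : u * (W - s) + (u - t) * s = vg - t * s.
    by rewrite invU_tauE; ring.
  have -> : vf * vg * - (Uf - Ug) = vf - vg.
    transitivity (vf * (Ug * vg) - vg * (Uf * vf)); first by ring.
    by rewrite !pinvP // !mulr1.
  by rewrite addrA subrK.
apply: AcoefD; first by apply/AcoefMl/AcoefN; case: weierstrass_cong.
apply: AcoefD; first exact/AcoefMl/altsum_approx.
by apply/AcoefMr/(Acoef_le inv_tau_approx); nia.
Qed.

Lemma weierstrass_P_approx : Acoef N (Pf - g * t * s).
Proof.
have [_ _ _ Ufu ef] := wf.
have -> : Pf - g * t * s = vf * (f - g) + g * (vf - t * s).
  transitivity ((Uf * vf) * Pf - g * t * s); first by rewrite pinvP // mul1r.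
  by rewrite (ef : f = Uf * Pf); ring.
apply: AcoefD; apply: AcoefMl; last exact: weierstrass_invU_approx.
by apply: (Acoef_le fg); rewrite leq_pmull.
Qed.

End Approximation.

End WeierstrassCongruence.

End IdealPowers.

Theorem proposition5p1 (R : comPzRingType) (a : R -> Prop)
  (F : nat -> R -> Prop) (n N : nat) (f g Pf Uf Pg Ug : pser R) :
  is_ideal a -> is_filtration a F -> complete_wrt F ->
  (1 <= N)%N ->
  distinguished a n f -> distinguished a n g ->
  weierstrass a n f Pf Uf -> weierstrass a n g Pg Ug ->
  pcong a (n.+1 * N) f g ->
  (pcong a N.+1 Pf Pg /\ pcong a N Uf Ug) /\
  (forall Pi : nat -> R -> Prop,
     (forall i, (i <= n.+1 * N)%N -> rep_system a (Pi i) i) ->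
     g = pmodA a Pi (n.+1 * N) f ->
     let t := pmodA a Pi (n.+1 * N - n) (pinv (tau n g)) in
     let s := altsum N (Sseq a Pi n N g t) in
     pcong a N (pinv Uf) (pmul t s) /\ pcong a N Pf (pmul (pmul g t) s)).
Proof.
move=> a_ideal hF hC N_gt0 _ dg wf wg /(ApowP a_ideal) fg.
have [PfPg UfUg] := weierstrass_cong a_ideal N_gt0 wf wg fg.
split; first by split; apply/(ApowP a_ideal).
move=> Pi Pi_rep _ t s; split; apply/(ApowP a_ideal).
- exact (weierstrass_invU_approx a_ideal N_gt0 wf wg fg hF hC dg Pi_rep).
- exact (weierstrass_P_approx a_ideal N_gt0 wf wg fg hF hC dg Pi_rep).
Qed.
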